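(* Let $\beta>0$ and let $H$ be a $3$-graph of order $n$. Let $X,Y$ be a partition of $V(H)$. Suppose that there are at most $\beta\binom{|X|}{2}\binom{|Y|}{2}$ copies of $K_4^-$ in $H$ with two vertices in $X$ and two vertices in $Y$. Then \[(|Y|-1)\,e(XXY)+(|X|-1)\,e(XYY)\le 2(1+\beta)\binom{|X|}{2}\binom{|Y|}{2}.\]
   Context: $K_4^-$ is the $3$-graph with $4$ vertices and $3$ edges; the number of copies of $K_4^-$ means the number of $4$-subsets of $V(H)$ spanning at least $3$ edges of $H$. $e(XXY)$ is the number of edges of $H$ with exactly two vertices in $X$ and one in $Y$, and $e(XYY)$ the number with one vertex in $X$ and two in $Y$. *)

From HB Require Import structures.
From mathcomp Require Import all_boot all_order all_algebra.
Set Implicit Arguments. Unset Strict Implicit. Unset Printing Implicit Defensive.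
Import Order.TTheory GRing.Theory Num.Theory.

Definition is_3graph (T : finType) (E : {set {set T}}) : Prop :=
  forall e, e \in E -> #|e| = 3.

Definition edges_in (T : finType) (E : {set {set T}}) (S : {set T}) : nat :=
  #|[set e in E | e \subset S]|.

(* copies of K4^- with two vertices in X and two in Y: 4-subsets S with
   |S ∩ X| = |S ∩ Y| = 2 spanning at least 3 edges *)
Definition K4m_XXYY (T : finType) (E : {set {set T}}) (X Y : {set T}) : nat :=
  #|[set S : {set T} | [&& #|S :&: X| == 2, #|S :&: Y| == 2 & 3 <= edges_in E S]]|.

Definition eXXY (T : finType) (E : {set {set T}}) (X Y : {set T}) : nat :=
  #|[set e in E | (#|e :&: X| == 2) && (#|e :&: Y| == 1)]|.
Definition eXYY (T : finType) (E : {set {set T}}) (X Y : {set T}) : nat :=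
  #|[set e in E | (#|e :&: X| == 1) && (#|e :&: Y| == 2)]|.

From HB Require Import structures.
From mathcomp Require Import all_boot all_order all_algebra.
From mathcomp Require Import zify ring.
Import Order.TTheory GRing.Theory Num.Theory.

(* Double count the pairs (e, S) with S a 4-set meeting X and Y in two
   vertices each and e an edge of H inside S.  An edge of type XXY lies in
   |Y| - 1 such sets S (add any other vertex of Y), and one of type XYY in
   |X| - 1 of them.  Conversely each S spans at most 4 edges, and at most 2
   unless S is a copy of K4^-, so the count is at most
   2 C(|X|,2) C(|Y|,2) + 2 (number of copies of K4^-). *)

Section Counting.

Context {T : finType}.
Implicit Types (E F : {set {set T}}) (A B X Y S e : {set T}).

Definition sets22 A B : {set {set T}} :=
  [set S | (#|S :&: A| == 2) && (#|S :&: B| == 2)].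

Lemma sets22C A B : sets22 A B = sets22 B A.
Proof. by apply/setP => S; rewrite !inE andbC. Qed.

Lemma card_set_in_sum E (P : pred {set T}) :
  #|[set e in E | P e]| = \sum_(e in E) P e.
Proof.
rewrite -sum1_card (eq_bigl (fun e => (e \in E) && P e)) => [|e]; last first.
  by rewrite inE.
by rewrite big_mkcondr; apply: eq_bigr => e _; case: (P e).
Qed.

Lemma sum_edges_in E F :
  \sum_(S in F) edges_in E S = \sum_(e in E) #|[set S in F | e \subset S]|.
Proof.
under eq_bigr => S _ do rewrite /edges_in card_set_in_sum.
by rewrite exchange_big; apply: eq_bigr => e _; rewrite card_set_in_sum.
Qed.

Lemma K4m_XXYY_sum E X Y :
  K4m_XXYY E X Y = \sum_(S in sets22 X Y) (3 <= edges_in E S).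
Proof.
by rewrite /K4m_XXYY -card_set_in_sum; apply: eq_card => S; rewrite !inE andbA.
Qed.

Lemma leq_card_sets22_supsets A B e :
  [disjoint A & B] -> #|e :&: A| = 2 -> #|e :&: B| = 1 ->
  #|B| - 1 <= #|[set S in sets22 A B | e \subset S]|.
Proof.
move=> dAB eA eB.
have -> : #|B| - 1 = #|B :\: e| by rewrite cardsD setIC eB.
have inj_add : {in B :\: e &, injective (fun y => y |: e)}.
  move=> y1 y2; rewrite !inE => /andP[y1e _] _ /setP/(_ y1).
  by rewrite !inE eqxx (negbTE y1e) !orbF => /esym/eqP.
rewrite -(card_in_imset inj_add); apply/subset_leq_card/subsetP => S /imsetP[y].
rewrite !inE => /andP[ye yB] ->.
have yA0 : [set y] :&: A = set0.
  by apply: disjoint_setI0; rewrite disjoints1 (disjointFl dAB yB).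
have yB1 : [set y] :&: B = [set y] by apply/setIidPl; rewrite sub1set.
rewrite subsetUr andbT !setIUl yA0 yB1 set0U eA eqxx /= -/(y |: _) cardsU1 eB.
by rewrite inE (negbTE ye).
Qed.

Lemma eXXY_eXYY_le_sum_edges_in E X Y :
  [disjoint X & Y] ->
  (#|Y| - 1) * eXXY E X Y + (#|X| - 1) * eXYY E X Y <=
    \sum_(S in sets22 X Y) edges_in E S.
Proof.
move=> dXY; rewrite sum_edges_in /eXXY /eXYY !card_set_in_sum !big_distrr.
rewrite -big_split; apply: leq_sum => e _ /=.
have [/andP[/eqP eX2 /eqP eY1] | _] :=
  boolP ((#|e :&: X| == 2) && (#|e :&: Y| == 1)).
  by rewrite eX2 muln1 muln0 addn0 leq_card_sets22_supsets.
have [/andP[/eqP eX1 /eqP eY2] | _] :=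
  boolP ((#|e :&: X| == 1) && (#|e :&: Y| == 2)); last by rewrite !muln0.
rewrite muln0 muln1 add0n sets22C.
by apply: leq_card_sets22_supsets; rewrite // disjoint_sym.
Qed.

Lemma edges_in_le_bin E S : is_3graph E -> edges_in E S <= 'C(#|S|, 3).
Proof.
move=> E3; rewrite /edges_in -cards_draws; apply/subset_leq_card/subsetP => e.
by rewrite !inE => /andP[eE ->]; rewrite E3.
Qed.

Section Partition.

Context {X Y : {set T}}.
Hypothesis XUY : X :|: Y = [set: T].

Lemma setI_partition S : S = (S :&: X) :|: (S :&: Y).
Proof. by rewrite -setIUr XUY setIT. Qed.

Lemma card_sets22 S :
  [disjoint X & Y] -> S \in sets22 X Y -> #|S| = 4.
Proof.
move=> dXY; rewrite inE => /andP[/eqP SX /eqP SY].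
rewrite [S in LHS]setI_partition cardsU SX SY setIACA.
by rewrite (disjoint_setI0 dXY) setI0 cards0.
Qed.

Lemma card_sets22_le : #|sets22 X Y| <= 'C(#|X|, 2) * 'C(#|Y|, 2).
Proof.
rewrite -!cards_draws -cardsX.
have inj_split : {in sets22 X Y &, injective (fun S => (S :&: X, S :&: Y))}.
  move=> S1 S2 _ _ [S1X S1Y].
  by rewrite (setI_partition S1) (setI_partition S2) S1X S1Y.
rewrite -(card_in_imset inj_split); apply/subset_leq_card/subsetP => p /imsetP[S].
by rewrite inE => /andP[SX SY] ->; rewrite !inE /= !subsetIr SX SY.
Qed.

Lemma sum_edges_in_sets22_le E :
  is_3graph E -> [disjoint X & Y] ->
  \sum_(S in sets22 X Y) edges_in E S <=
    2 * ('C(#|X|, 2) * 'C(#|Y|, 2)) + 2 * K4m_XXYY E X Y.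
Proof.
move=> E3 dXY; rewrite K4m_XXYY_sum.
apply: (@leq_trans (\sum_(S in sets22 X Y) (2 + 2 * (3 <= edges_in E S)))).
  apply: leq_sum => S S22.
  have := edges_in_le_bin E S E3.
  rewrite (card_sets22 _ dXY S22) (_ : 'C(4, 3) = 4) //.
  by case: ltnP; lia.
rewrite big_split -big_distrr sum_nat_const /= leq_add2r mulnC leq_mul2l.
by rewrite card_sets22_le.
Qed.

End Partition.

End Counting.

Local Open Scope ring_scope.

Theorem proposition3p4 (T : finType) (E : {set {set T}}) (X Y : {set T})
  (beta : rat) :
  0 < beta ->
  is_3graph E ->
  [disjoint X & Y] -> X :|: Y = [set: T] ->
  ((K4m_XXYY E X Y)%:R <= beta * ('C(#|X|, 2) * 'C(#|Y|, 2))%:R) ->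
  ((#|Y| - 1) * eXXY E X Y + (#|X| - 1) * eXYY E X Y)%:R
    <= 2 * (1 + beta) * ('C(#|X|, 2) * 'C(#|Y|, 2))%:R.
Proof.
move=> _ E3 dXY XUY K4m_le.
apply: le_trans (_ : _ <= (2 * ('C(#|X|, 2) * 'C(#|Y|, 2))
                            + 2 * K4m_XXYY E X Y)%N%:R) _.
  rewrite ler_nat; apply: leq_trans (eXXY_eXYY_le_sum_edges_in E X Y dXY) _.
  exact: sum_edges_in_sets22_le.
set N := ('C(#|X|, 2) * 'C(#|Y|, 2))%N in K4m_le *.
have -> : 2 * (1 + beta) * N%:R = (2 * N)%:R + 2 * (beta * N%:R).
  by rewrite natrM; ring.
by rewrite natrD lerD2l natrM ler_wpM2l.
Qed.
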